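(* Let $k\ge2$ and $m\ge1$ be integers and consider any realization of the random $k$-tree $G(m)$. For an edge $e$ of $G(m)$ let $N(e)$ be the number of $k$-cliques of $G(m)$ containing $e$. Let $F$ be the spanning forest of $G(m)$ defined as follows: for each $1\le t\le m$, if the vertex $x$ born in round $t$ was joined to the $k$-clique $C$, then in $F$ the vertex $x$ is joined to a vertex $u\in V(C)$ with $N(xu)=\max_{v\in V(C)}N(xv)$ (ties broken arbitrarily). If $xy\in E(F)$, $x$ is born later than $y$, and the degree of $x$ in $G(m)$ is greater than $2k-2$, then $N(xy)\ge (k^2-k)/2$.
   Context: Random $k$-tree process: $G(0)$ is a clique on $k$ vertices (born in round $0$); for $t\ge1$, $G(t)$ is obtained from $G(t-1)$ by choosing a $k$-clique of $G(t-1)$ uniformly at random, creating a new vertex (born in round $t$), and joining it to all vertices of the chosen clique. *)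

From mathcomp Require Import all_boot.
Unset Printing Implicit Defensive.

(* Vertices are natural numbers: 0..k-1 form the initial clique G(0)
   (born in round 0), and vertex k+t-1 is the vertex born in round t >= 1.
   Hence V(G(t)) = {0, ..., k+t-1}.
   A realization (history) is c : nat -> seq nat, where c t is the
   k-clique of G(t-1) chosen in round t. *)

Definition born (k x : nat) : nat := if x < k then 0 else x - k + 1.

Definition kt_edge (k : nat) (c : nat -> seq nat) (t x y : nat) : bool :=
  [&& x < k + t, y < k + t, x != y &
      (maxn x y < k) || (minn x y \in c (maxn x y - k + 1))].

Definition is_kclique (k : nat) (c : nat -> seq nat) (t : nat) (C : seq nat) : bool :=
  [&& uniq C, size C == k, all (fun v => v < k + t) C &
      all (fun u => all (fun v => (u == v) || kt_edge k c t u v) C) C].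

Definition valid_history (k m : nat) (c : nat -> seq nat) : Prop :=
  forall t, 1 <= t <= m -> is_kclique k c t.-1 (c t).

Definition is_clique_set (k : nat) (c : nat -> seq nat) (t : nat)
  (S : {set 'I_(k + t)}) : bool :=
  [forall i in S, forall j in S, (i == j) || kt_edge k c t i j].

Definition Ncl (k : nat) (c : nat -> seq nat) (t x y : nat) : nat :=
  #|[set S : {set 'I_(k + t)} |
      [&& #|S| == k, is_clique_set k c t S,
          [exists i in S, nat_of_ord i == x] &
          [exists i in S, nat_of_ord i == y]]]|.

Definition kt_deg (k : nat) (c : nat -> seq nat) (t x : nat) : nat :=
  #|[set i : 'I_(k + t) | kt_edge k c t x i]|.

(* par : the choice of the F-neighbour of each vertex born in rounds 1..m:
   par x lies in the clique x was joined to and maximizes N(x _) over it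
   (ties broken arbitrarily, i.e. par is any such choice). *)
Definition forest_choice (k m : nat) (c : nat -> seq nat) (par : nat -> nat) : Prop :=
  forall t, 1 <= t <= m ->
    par (k + t - 1) \in c t /\
    forall v, v \in c t -> Ncl k c m (k + t - 1) v <= Ncl k c m (k + t - 1) (par (k + t - 1)).

Definition F_edge (k m : nat) (par : nat -> nat) (x y : nat) : bool :=
  ((k <= x < k + m) && (y == par x)) || ((k <= y < k + m) && (x == par y)).

From mathcomp Require Import all_boot zify.

(* Let x be born in round t, attached to the clique C = c t. Besides C, the
   neighbours of x are the vertices born in the rounds s whose chosen clique
   contains x, so degree > 2k - 2 gives k - 1 such rounds s_0 < ... < s_(k-2).
   Every vertex of c s_r outside C is x or a vertex born in s_0, ..., s_(r-1),
   so c s_r meets C in at least k - 1 - r vertices. Summing over r, some v in C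
   lies in at least (k - 1)/2 of the cliques c s_r. Now round t contributes
   k - 1 k-cliques through xv, and every round s with x, v in c s contributes
   k - 2 more (the (k+1)-clique created in round s minus a vertex other than
   x and v); they are pairwise distinct, so N(xv) >= k(k - 1)/2, and the
   forest neighbour y of x maximises N(x _) over C. *)

Lemma card_ord_set_le n (A : {set 'I_n}) (s : seq nat) :
  {in A, forall i, val i \in s} -> #|A| <= size s.
Proof.
move=> sAs; rewrite cardE -(size_map val); apply: uniq_leq_size.
  by rewrite map_inj_uniq ?enum_uniq //; exact: val_inj.
by move=> _ /mapP [i + ->]; rewrite mem_enum; exact: sAs.
Qed.

Lemma card_ord_set n (s : seq nat) : uniq s -> all (fun v => v < n) s ->
  #|[set i : 'I_n | val i \in s]| = size s.
Proof.
move=> s_uniq s_lt; apply/eqP; rewrite eqn_leq card_ord_set_le; last by move=> i; rewrite inE.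
rewrite cardE -(size_map val); apply: uniq_leq_size => // v sv.
have v_lt : v < n by exact: (allP s_lt).
by apply/mapP; exists (Ordinal v_lt); rewrite // mem_enum inE.
Qed.

Lemma count_predC1_uniq (s : seq nat) a : uniq s -> a \in s ->
  count (predC1 a) s = (size s).-1.
Proof.
move=> s_uniq sa; have := count_predC (pred1 a) s.
by rewrite count_uniq_mem // sa add1n => <-.
Qed.

Lemma count_predC2_uniq (s : seq nat) a b : uniq s -> a \in s -> b \in s -> a != b ->
  count (fun u => (u != a) && (u != b)) s = size s - 2.
Proof.
move=> s_uniq sa sb neq_ab.
have disj : count (predI (pred1 a) (pred1 b)) s = 0.
  apply/eqP; rewrite -leqn0 leqNgt -has_count.
  by apply/hasP => -[u _ /andP [/eqP -> /eqP eq_ab]]; rewrite eq_ab eqxx in neq_ab.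
have := count_predUI (pred1 a) (pred1 b) s; rewrite disj addn0 !count_uniq_mem // sa sb.
rewrite -(count_predC (predU (pred1 a) (pred1 b)) s) => ->; rewrite addKn.
by apply: eq_count => u /=; rewrite negb_or.
Qed.

Lemma count_mem_sym (s1 s2 : seq nat) : uniq s1 -> uniq s2 ->
  count (mem s1) s2 = count (mem s2) s1.
Proof.
move=> s1_uniq s2_uniq; rewrite -!size_filter; apply/perm_size/uniq_perm.
- exact: filter_uniq.
- exact: filter_uniq.
- by move=> u; rewrite !mem_filter andbC.
Qed.

Lemma mem_take_sorted_ltn (s : seq nat) r x : sorted ltn s -> r < size s ->
  x \in s -> x < nth 0 s r -> x \in take r s.
Proof.
move=> s_sorted r_lt sx x_lt; rewrite -(nth_index 0 sx) in x_lt *.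
case: (ltngtP (index x s) r) => [ir|ri|ir]; last by rewrite ir ltnn in x_lt.
  by rewrite -(nth_take 0 ir) mem_nth // size_takel // ltnW.
have := sorted_ltn_nth ltn_trans 0 s_sorted r (index x s).
by rewrite !inE r_lt index_mem sx => /(_ isT isT ri) /(ltn_trans x_lt); rewrite ltnn.
Qed.

Lemma double_sum_subn n : 2 * \sum_(0 <= i < n) (n - i) = n * n.+1.
Proof.
elim: n => [|n IH]; first by rewrite big_geq.
rewrite big_nat_recl // mulnDr (eq_bigr (fun i => n - i)) ?IH => [|i _]; last by rewrite subSS.
by rewrite subn0; lia.
Qed.

Lemma sum_nat_count (T : Type) (a : pred T) (s : seq T) : \sum_(i <- s) (a i : nat) = count a s.
Proof. by rewrite -sumn_count sumnE big_map. Qed.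

Lemma sum_gt_exists (T : eqType) (s : seq T) (f : T -> nat) b :
  size s * b < \sum_(i <- s) f i -> exists2 i, i \in s & b < f i.
Proof.
have [/hasP // | /hasPn f_le] := boolP (has (fun i => b < f i) s).
rewrite ltnNge => /negP []; rewrite -sum1_size big_distrl /= big_seq_cond [X in _ <= X]big_seq_cond.
by apply: leq_sum => i /andP [/f_le f_i _]; rewrite mul1n leqNgt.
Qed.

Lemma born_mono k : {homo born k : a b / a <= b}.
Proof. by move=> a b; rewrite /born; case: ifP; case: ifP; lia. Qed.

Section KTreeEdges.
Variables (k : nat) (c : nat -> seq nat).

Lemma kt_edge_mono t t' a b : t <= t' -> kt_edge k c t a b -> kt_edge k c t' a b.
Proof. by move=> le_t /and4P [a_lt b_lt neq_ab ab]; apply/and4P; split=> //; lia. Qed.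

Lemma kt_edgeC t a b : kt_edge k c t a b = kt_edge k c t b a.
Proof. by rewrite /kt_edge maxnC minnC eq_sym; case: (a < _); case: (b < _). Qed.

Lemma kt_edge_ltn t a b : a < b ->
  kt_edge k c t a b = (b < k + t) && ((b < k) || (a \in c (b - k + 1))).
Proof.
move=> lt_ab; rewrite /kt_edge (maxn_idPr (ltnW lt_ab)) (minn_idPl (ltnW lt_ab)).
rewrite (ltn_eqF lt_ab) /=; case: (ltnP b (k + t)) => b_lt; last by rewrite andbF.
by rewrite (ltn_trans lt_ab b_lt).
Qed.

End KTreeEdges.

Section RandomKTree.
Variables (k m : nat) (c : nat -> seq nat).
Hypothesis hist : valid_history k m c.

Lemma round_clique_uniq {s} : 1 <= s <= m -> uniq (c s).
Proof. by move/hist => /and4P []. Qed.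

Lemma round_clique_size {s} : 1 <= s <= m -> size (c s) = k.
Proof. by move/hist => /and4P [_ /eqP]. Qed.

Lemma round_clique_ltn {s u} : 1 <= s <= m -> u \in c s -> u < k + s - 1.
Proof.
move=> s_rng cu; have /and4P [_ _ /allP /(_ u cu) /= u_lt _] := hist _ s_rng.
by rewrite -subn1 in u_lt; lia.
Qed.

Lemma round_clique_edge {s a b} : 1 <= s <= m -> a \in c s -> b \in c s -> a != b ->
  kt_edge k c m a b.
Proof.
move=> s_rng ca cb neq_ab; have /and4P [_ _ _ /allP cl] := hist _ s_rng.
by have /allP /(_ b cb) := cl a ca; rewrite (negbTE neq_ab) /=; apply: kt_edge_mono; lia.
Qed.

Lemma kt_edge_newborn_below {t u} : 1 <= t <= m -> u < k + t - 1 ->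
  kt_edge k c m (k + t - 1) u = (u \in c t).
Proof.
move=> t_rng u_lt; rewrite kt_edgeC kt_edge_ltn //.
have -> : k + t - 1 - k + 1 = t by lia.
have -> : k + t - 1 < k + m by lia.
by have -> : k + t - 1 < k = false by lia.
Qed.

Lemma kt_edge_newborn_above {t u} : 1 <= t -> k + t - 1 < u ->
  kt_edge k c m (k + t - 1) u = (u < k + m) && (k + t - 1 \in c (u - k + 1)).
Proof. by move=> t_ge1 u_gt; rewrite kt_edge_ltn // (_ : u < k = false) //; lia. Qed.

Lemma kt_edge_round {s a b} : 1 <= s <= m ->
  a \in (k + s - 1) :: c s -> b \in (k + s - 1) :: c s -> a != b -> kt_edge k c m a b.
Proof.
move=> s_rng; have newborn_edge u : u \in c s -> kt_edge k c m (k + s - 1) u.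
  by move=> cu; rewrite kt_edge_newborn_below // round_clique_ltn.
rewrite !inE => /predU1P [-> | ca] /predU1P [-> | cb] neq_ab.
- by rewrite eqxx in neq_ab.
- exact: newborn_edge.
- by rewrite kt_edgeC; exact: newborn_edge.
- exact: round_clique_edge ca cb neq_ab.
Qed.

Definition face s u := (k + s - 1) :: [seq v <- c s | v != u].

Definition ord_set (s : seq nat) : {set 'I_(k + m)} := [set i | val i \in s].

Lemma ord_set_mem {s1 s2} a : ord_set s1 = ord_set s2 -> a < k + m ->
  (a \in s1) = (a \in s2).
Proof.
by move=> eq_s a_lt; have := congr1 (fun S : {set _} => Ordinal a_lt \in S) eq_s; rewrite !inE.
Qed.

Lemma face_leq {s u v} : 1 <= s <= m -> v \in face s u -> v <= k + s - 1.
Proof.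
move=> s_rng; rewrite inE mem_filter => /predU1P [-> // | /andP [_ cv]].
exact: ltnW (round_clique_ltn s_rng cv).
Qed.

Lemma face_uniq s u : 1 <= s <= m -> uniq (face s u).
Proof.
move=> s_rng; rewrite /= filter_uniq ?round_clique_uniq // andbT mem_filter.
by apply/negP => /andP [_ /(round_clique_ltn s_rng)]; rewrite ltnn.
Qed.

Lemma face_size s u : 1 <= s <= m -> u \in c s -> size (face s u) = k.
Proof.
move=> s_rng cu; rewrite /= size_filter count_predC1_uniq ?round_clique_uniq //.
rewrite prednK ?round_clique_size // -(round_clique_size s_rng) -has_predT.
exact/hasP/(ex_intro2 _ _ u).
Qed.

Lemma face_ncl {s u a b} : 1 <= s <= m -> u \in c s -> a \in face s u -> b \in face s u ->
  [&& #|ord_set (face s u)| == k, is_clique_set k c m (ord_set (face s u)),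
      [exists i in ord_set (face s u), nat_of_ord i == a] &
      [exists i in ord_set (face s u), nat_of_ord i == b]].
Proof.
move=> s_rng cu fa fb.
have face_lt v : v \in face s u -> v < k + m by move/(face_leq s_rng); lia.
have face_ex v : v \in face s u -> [exists i in ord_set (face s u), nat_of_ord i == v].
  by move=> fv; apply/existsP; exists (Ordinal (face_lt v fv)); rewrite inE /= fv eqxx.
have card_face : #|ord_set (face s u)| = k.
  by rewrite card_ord_set ?face_size ?face_uniq //; apply/allP => v /face_lt.
rewrite card_face eqxx face_ex // face_ex // !andbT /=.
apply/forallP => i; apply/implyP; rewrite inE => fi.
apply/forallP => j; apply/implyP; rewrite inE => fj.
have [// | neq_ij] := eqVneq i j; apply/orP; right.
have sub_face v : v \in face s u -> v \in (k + s - 1) :: c s.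
  by rewrite !inE mem_filter => /predU1P [-> | /andP [_ ->]]; rewrite ?eqxx ?orbT.
by apply: kt_edge_round s_rng (sub_face _ fi) (sub_face _ fj) _; rewrite val_eqE.
Qed.

Lemma ord_set_face_inj {s1 s2 u1 u2} : 1 <= s1 <= m -> 1 <= s2 <= m -> u1 \in c s1 ->
  ord_set (face s1 u1) = ord_set (face s2 u2) -> s1 = s2 /\ u1 = u2.
Proof.
move=> s1_rng s2_rng cu1 eq_faces.
have newborn_leq s s' u u' : 1 <= s <= m -> 1 <= s' <= m ->
    ord_set (face s u) = ord_set (face s' u') -> s' <= s.
  move=> s_rng s'_rng eq_f; have : k + s' - 1 \in face s u.
    by rewrite (ord_set_mem _ eq_f) ?mem_head //; lia.
  by move/(face_leq s_rng); lia.
have eq_s : s1 = s2.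
  apply/eqP; rewrite eqn_leq (newborn_leq _ _ _ _ s2_rng s1_rng (esym eq_faces)).
  exact: newborn_leq s1_rng s2_rng eq_faces.
subst s2; split=> //; apply/eqP/negP => /negP neq_u.
have u1_lt : u1 < k + m by have := round_clique_ltn s1_rng cu1; lia.
have := ord_set_mem u1 eq_faces u1_lt.
by rewrite !inE !mem_filter eqxx cu1 neq_u ltn_eqF // (round_clique_ltn s1_rng cu1).
Qed.

Definition child_rounds t := [seq s <- iota t.+1 (m - t) | k + t - 1 \in c s].

Lemma mem_child_rounds t s : t <= m ->
  (s \in child_rounds t) = [&& t < s, s <= m & k + t - 1 \in c s].
Proof.
move=> t_le; rewrite mem_filter mem_iota andbC; case: (_ \in _); rewrite ?andbF ?andbT //.
by apply/idP/idP => /andP [lt_ts s_le]; apply/andP; split; lia.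
Qed.

Lemma child_rounds_uniq t : uniq (child_rounds t).
Proof. exact/filter_uniq/iota_uniq. Qed.

Lemma child_rounds_sorted t : sorted ltn (child_rounds t).
Proof. exact/sorted_filter/iota_ltn_sorted/ltn_trans. Qed.

Lemma kt_edge_newborn_child {t u} : 1 <= t <= m -> k + t - 1 < u ->
  kt_edge k c m (k + t - 1) u -> exists2 s, s \in child_rounds t & u = k + s - 1.
Proof.
move=> t_rng u_gt; rewrite kt_edge_newborn_above //; last lia.
move=> /andP [u_lt x_in]; exists (u - k + 1); last lia.
rewrite mem_child_rounds ?x_in ?andbT; last lia.
by apply/andP; split; lia.
Qed.

Lemma kt_deg_newborn_le {t} : 1 <= t <= m ->
  kt_deg k c m (k + t - 1) <= k + size (child_rounds t).
Proof.
move=> t_rng; set nbrs := c t ++ [seq k + s - 1 | s <- child_rounds t].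
have -> : k + size (child_rounds t) = size nbrs by rewrite size_cat size_map round_clique_size.
apply: card_ord_set_le => i; rewrite inE mem_cat => x_i.
case: (ltngtP i (k + t - 1)) => [i_lt | i_gt | i_eq].
- by rewrite -(kt_edge_newborn_below t_rng i_lt) x_i.
- have [s cs i_eq] := kt_edge_newborn_child t_rng i_gt x_i.
  by apply/orP; right; apply/mapP; exists s.
- by move: x_i; rewrite i_eq /kt_edge eqxx !andbF.
Qed.

Lemma child_clique_overlap t r : 1 <= t <= m -> r < size (child_rounds t) ->
  k - 1 - r <= count (mem (c t)) (c (nth 0 (child_rounds t) r)).
Proof.
move=> t_rng r_lt; set Q := child_rounds t; set s := nth 0 Q r.
have /and3P [lt_ts s_le x_in] : [&& t < s, s <= m & k + t - 1 \in c s].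
  by rewrite -mem_child_rounds ?mem_nth //; lia.
have s_rng : 1 <= s <= m by lia.
suff : count (predC (mem (c t))) (c s) <= r.+1.
  by have := count_predC (mem (c t)) (c s); rewrite round_clique_size //; lia.
have -> : r.+1 = size ((k + t - 1) :: map (fun s' => k + s' - 1) (take r Q)).
  by rewrite /= size_map size_takel // ltnW.
rewrite -size_filter; apply: uniq_leq_size; first exact/filter_uniq/round_clique_uniq.
move=> u; rewrite mem_filter in_cons => /andP [u_out cu].
case: (eqVneq u (k + t - 1)) => [// | neq_ux] /=.
have x_u : kt_edge k c m (k + t - 1) u.
  by rewrite kt_edgeC; apply: round_clique_edge cu x_in neq_ux.
case: (ltngtP u (k + t - 1)) => [u_lt | u_gt | u_eq]; last by rewrite u_eq eqxx in neq_ux.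
  by move: x_u; rewrite kt_edge_newborn_below // => cu'; rewrite /= cu' in u_out.
have [s' cs' u_eq] := kt_edge_newborn_child t_rng u_gt x_u; apply/mapP; exists s' => //.
apply: (mem_take_sorted_ltn _ _ _ (child_rounds_sorted t) r_lt cs').
by rewrite -/Q -/s; have := round_clique_ltn s_rng cu; lia.
Qed.

Definition faces_through a b (rounds : seq nat) : seq {set 'I_(k + m)} :=
  [seq ord_set (face s u) | s <- rounds,
     u <- [seq u <- c s | (a \in face s u) && (b \in face s u)]].

Lemma Ncl_ge_faces_through a b rounds : uniq rounds -> {in rounds, forall s, 1 <= s <= m} ->
  size (faces_through a b rounds) <= Ncl k c m a b.
Proof.
move=> rounds_uniq rounds_rng; rewrite /Ncl cardE; apply: uniq_leq_size.
  apply: allpairs_uniq_dep => // [s s_in|]; first exact/filter_uniq/round_clique_uniq/rounds_rng.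
  move=> _ _ /allpairsPdep [s1 [u1 [s1_in + ->]]] /allpairsPdep [s2 [u2 [s2_in _ ->]]] /=.
  rewrite mem_filter => /andP [_ cu1] eq_faces.
  by have [-> ->] := ord_set_face_inj (rounds_rng _ s1_in) (rounds_rng _ s2_in) cu1 eq_faces.
move=> _ /allpairsPdep [s [u [s_in + ->]]]; rewrite mem_filter mem_enum => /andP [/andP [fa fb] cu].
by rewrite inE; exact: face_ncl (rounds_rng _ s_in) cu fa fb.
Qed.

Lemma count_faces_through_own t v : 1 <= t <= m -> v \in c t ->
  count (fun u => (k + t - 1 \in face t u) && (v \in face t u)) (c t) = k - 1.
Proof.
move=> t_rng cv; have -> : k - 1 = count (predC1 v) (c t).
  by rewrite count_predC1_uniq ?round_clique_uniq // round_clique_size // subn1.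
apply: eq_in_count => u _; rewrite /face !inE eqxx /= mem_filter cv andbT.
by rewrite ltn_eqF ?(round_clique_ltn t_rng cv) //= eq_sym.
Qed.

Lemma count_faces_through_child t s v : 1 <= t <= m -> s \in child_rounds t -> v \in c t ->
  count (fun u => (k + t - 1 \in face s u) && (v \in face s u)) (c s) = (k - 2) * (v \in c s).
Proof.
move=> t_rng; rewrite mem_child_rounds; last by case/andP: t_rng.
move=> /and3P [lt_ts s_le x_in] cv; have s_rng : 1 <= s <= m by lia.
have v_lt : v < k + t - 1 := round_clique_ltn t_rng cv.
case cvs: (v \in c s).
  have -> : (k - 2) * true = count (fun u => (u != k + t - 1) && (u != v)) (c s).
    by rewrite count_predC2_uniq ?round_clique_uniq ?round_clique_size ?muln1 ?gtn_eqF.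
  apply: eq_in_count => u _; rewrite /face !inE /= !mem_filter x_in cvs !andbT.
  have x_lt : k + t - 1 < k + s - 1 by lia.
  by rewrite (ltn_eqF x_lt) (ltn_eqF (ltn_trans v_lt x_lt)) /= ![_ == u]eq_sym.
rewrite muln0; apply/eqP; rewrite -leqn0 leqNgt -has_count; apply/hasP => -[u _].
by rewrite /face !inE !mem_filter cvs andbF orbF => /andP [_ /eqP]; lia.
Qed.

Lemma Ncl_newborn_ge {t v Zs} : 1 <= t <= m -> v \in c t -> uniq Zs ->
  {subset Zs <= child_rounds t} ->
  (k - 1) + (k - 2) * count (fun s => v \in c s) Zs <= Ncl k c m (k + t - 1) v.
Proof.
move=> t_rng cv Zs_uniq Zs_child; have t_le : t <= m by case/andP: t_rng.
have Zs_gt s : s \in Zs -> t < s <= m.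
  by move/Zs_child; rewrite mem_child_rounds // => /and3P [-> -> _].
have rounds_uniq : uniq (t :: Zs).
  by rewrite /= Zs_uniq andbT; apply/negP => /Zs_gt; rewrite ltnn.
have rounds_rng : {in t :: Zs, forall s, 1 <= s <= m}.
  by move=> s; rewrite inE => /predU1P [-> // | /Zs_gt]; lia.
apply: leq_trans (Ncl_ge_faces_through _ _ _ rounds_uniq rounds_rng).
rewrite size_allpairs_dep /= size_filter count_faces_through_own // leq_add2l.
rewrite -sumn_count !sumnE !big_map big_distrr /=; apply/eq_leq.
by apply: eq_big_seq => s s_in; rewrite size_filter count_faces_through_child // Zs_child.
Qed.

Lemma first_children_overlap_sum {t} : 1 <= t <= m -> k - 1 <= size (child_rounds t) ->
  k * (k - 1) <= \sum_(v <- c t) 2 * count (fun s => v \in c s) (take (k - 1) (child_rounds t)).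
Proof.
move=> t_rng many_children; set Zs := take (k - 1) (child_rounds t).
have Zs_size : size Zs = k - 1 by rewrite size_takel.
have Zs_rng s : s \in Zs -> 1 <= s <= m.
  by move/mem_take; rewrite mem_child_rounds; [lia | case/andP: t_rng].
rewrite -big_distrr /=.
have -> : \sum_(v <- c t) count (fun s => v \in c s) Zs = \sum_(s <- Zs) count (mem (c t)) (c s).
  under eq_bigr do rewrite -sum_nat_count.
  rewrite exchange_big /=; apply: eq_big_seq => s /Zs_rng s_rng.
  by rewrite sum_nat_count count_mem_sym ?round_clique_uniq.
have -> : k * (k - 1) = 2 * \sum_(0 <= r < k - 1) (k - 1 - r).
  by rewrite double_sum_subn mulnC; case: (k) => // k'; rewrite subSS subn0.
rewrite leq_mul2l /= [X in _ <= X](big_nth 0) Zs_size big_nat_cond [X in _ <= X]big_nat_cond.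
apply: leq_sum => r /andP [/andP [_ r_lt] _].
by rewrite nth_take // child_clique_overlap // (leq_trans r_lt).
Qed.

Lemma Ncl_newborn_high_degree t : 2 <= k -> 1 <= t <= m ->
  2 * k - 2 < kt_deg k c m (k + t - 1) ->
  exists2 v, v \in c t & (k ^ 2 - k) %/ 2 <= Ncl k c m (k + t - 1) v.
Proof.
move=> k_ge2 t_rng high_deg; set Zs := take (k - 1) (child_rounds t).
have many_children : k - 1 <= size (child_rounds t).
  by have := kt_deg_newborn_le t_rng; lia.
have [v cv v_shared] : exists2 v, v \in c t & k - 2 < 2 * count (fun s => v \in c s) Zs.
  apply: sum_gt_exists; rewrite round_clique_size //.
  apply: leq_trans (first_children_overlap_sum t_rng many_children).
  by rewrite ltn_pmul2l; lia.
exists v => //.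
have N_ge := Ncl_newborn_ge (Zs := Zs) t_rng cv (take_uniq _ (child_rounds_uniq t))
  (@mem_take _ _ _).
set n := count _ Zs in v_shared N_ge; set N := Ncl _ _ _ _ _ in N_ge *.
have double_N : k * (k - 1) <= N * 2.
  apply: (leq_trans _ (leq_mul N_ge (leqnn 2))); rewrite mulnDl -mulnA [n * 2]mulnC.
  have -> : k * (k - 1) = (k - 1) * 2 + (k - 2) * (k - 1).
    by case: (k) k_ge2 => [|[|j]] // _; rewrite !subSS !subn0; nia.
  by rewrite leq_add2l leq_mul2l (_ : k - 1 <= 2 * n) ?orbT //; lia.
have -> : k ^ 2 - k = k * (k - 1) by rewrite mulnBr muln1.
by rewrite -(mulnK N (ltn0Sn 1)) (leq_div2r 2 double_N).
Qed.

Lemma F_edge_older_parent par x y : forest_choice k m c par ->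
  F_edge k m par x y -> born k y < born k x -> k <= x < k + m /\ y = par x.
Proof.
move=> choice /orP [/andP [x_rng /eqP -> //] | /andP [y_rng /eqP x_par]] born_lt.
have t_rng : 1 <= y - k + 1 <= m by lia.
have y_eq : k + (y - k + 1) - 1 = y by lia.
have [par_in _] := choice _ t_rng; rewrite y_eq -x_par in par_in.
by have := born_mono k _ _ (ltnW (round_clique_ltn t_rng par_in)); rewrite y_eq; lia.
Qed.

End RandomKTree.

Theorem lemma5 (k m : nat) (c : nat -> seq nat) (par : nat -> nat) (x y : nat) :
  2 <= k -> 1 <= m ->
  valid_history k m c ->
  forest_choice k m c par ->
  F_edge k m par x y ->
  born k y < born k x ->
  2 * k - 2 < kt_deg k c m x ->
  (k ^ 2 - k) %/ 2 <= Ncl k c m x y.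
Proof.
move=> k_ge2 _ hist choice xy_edge born_lt high_deg.
have [x_rng ->] := F_edge_older_parent k m c hist par x y choice xy_edge born_lt.
set t := x - k + 1; have t_rng : 1 <= t <= m by lia.
have x_eq : x = k + t - 1 by lia.
rewrite x_eq in high_deg *.
have [v cv Nv] := Ncl_newborn_high_degree k m c hist t k_ge2 t_rng high_deg.
have [_ par_max] := choice t t_rng.
exact: leq_trans Nv (par_max v cv).
Qed.
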